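(* Let $Q$ be a polynomial with $Q(0)=0$, let $\varepsilon>0$, let $N<\infty$, and let $\varphi$ be a function decreasing to zero at infinity. Then there exist an integer $M>N$ and a polynomial $P$ with $P(0)=0$ and $\deg P\le M$ such that $$\|P\|_{[-1,1]}\le\varepsilon$$ and $$|(Q+P)(t)|\le e^{-2M}\qquad\text{for all } |t|\le\varphi(M).$$
   Context: $\|P\|_{[-1,1]}=\max_{x\in[-1,1]}|P(x)|$. *)

From HB Require Import structures.
From mathcomp Require Import all_boot all_order all_algebra.
From mathcomp Require Import all_classical all_reals all_analysis.
Set Implicit Arguments. Unset Strict Implicit. Unset Printing Implicit Defensive.
Import Order.TTheory GRing.Theory Num.Theory.
Local Open Scope classical_set_scope.
Local Open Scope ring_scope.

(* ||P||_[-1,1] = max_{x in [-1,1]} |P(x)|, written as the supremum of the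
   (compact, nonempty, hence attained) image set. *)
Definition supnorm11 (R : realType) (P : {poly R}) : R :=
  sup [set `|P.[x]| | x in `[-1, 1]%classic].

From HB Require Import structures.
From mathcomp Require Import all_boot all_order all_algebra.
From mathcomp Require Import all_classical all_reals all_analysis.
From mathcomp Require Import ring lra zify.
Import Order.TTheory GRing.Theory Num.Theory numFieldNormedType.Exports.
Local Open Scope classical_set_scope.
Local Open Scope ring_scope.

(* Write Q = 'X * Q', so that |Q(t)| <= C|t| on [-1, 1].  Let S(t) be the
   probability that a binomial (K j, t^2) variable is at most j: a polynomial of
   degree 2Kj with values in [0, 1] on [-1, 1].  Take P = -Q S, so Q + P = Q (1 - S).
   The upper binomial tail gives 1 - S(t) <= 2^(Kj) t^(2(j+1)), so Q + P is
   exponentially small in the degree on a fixed neighbourhood of 0.  The Chernoff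
   bound S(t) <= 2^j (1 - t^2/2)^(Kj) makes S(t) <= 2^-j for |t| >= eta once K is
   large, while |Q(t)| <= C eta for |t| <= eta; hence ||P|| <= eps.  Finally j is
   taken so large that the degree M exceeds N and phi(M) lies in that neighbourhood. *)

Section Bernstein.
Context {R : realFieldType}.
Implicit Types (x : R) (n i j : nat).

Definition bernstein n i : {poly R} := 'C(n, i)%:R *: ((1 - 'X) ^+ (n - i) * 'X ^+ i).

Definition binom_cdf n j : {poly R} := \sum_(i < n.+1 | (i <= j)%N) bernstein n i.

Lemma horner_bernstein n i x :
  (bernstein n i).[x] = (1 - x) ^+ (n - i) * x ^+ i *+ 'C(n, i).
Proof.
by rewrite /bernstein hornerZ mulr_natl hornerM !horner_exp hornerD hornerN hornerC hornerX.
Qed.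

Lemma bernstein_ge0 n i x : 0 <= x <= 1 -> 0 <= (bernstein n i).[x].
Proof.
by case/andP=> x_ge0 x_le1; rewrite horner_bernstein mulrn_wge0 ?mulr_ge0 ?exprn_ge0 ?subr_ge0.
Qed.

Lemma sum_bernstein n x : \sum_(i < n.+1) (bernstein n i).[x] = 1.
Proof.
by under eq_bigr do rewrite horner_bernstein; rewrite -exprDn subrK expr1n.
Qed.

Lemma size_binom_cdf n j : (size (binom_cdf n j) <= n.+1)%N.
Proof.
apply: leq_trans (size_sum _ _ _) _; apply/bigmax_leqP => i _.
rewrite /bernstein; apply: leq_trans (size_scale_leq _ _) _.
apply: leq_trans (size_polyMleq _ _) _.
have size_1subX : size (1 - 'X : {poly R}) = 2%N.
  by rewrite -opprB size_polyN size_XsubC.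
have := size_poly_exp_leq (1 - 'X : {poly R}) (n - i).
rewrite size_1subX size_polyXn mul1n.
by move: (size _) (ltn_ord i) => s; lia.
Qed.

Lemma binom_cdf_ge0 n j x : 0 <= x <= 1 -> 0 <= (binom_cdf n j).[x].
Proof. by move=> x01; rewrite horner_sum sumr_ge0 // => i _; apply: bernstein_ge0. Qed.

Lemma binom_cdf_le1 n j x : 0 <= x <= 1 -> (binom_cdf n j).[x] <= 1.
Proof.
move=> x01; rewrite -(sum_bernstein n x) horner_sum.
rewrite [leRHS](bigID (fun i : 'I__ => (i <= j)%N)) /=.
by rewrite lerDl sumr_ge0 // => i _; apply: bernstein_ge0.
Qed.

Lemma binom_cdf_upper_tail n j x :
  0 <= x <= 1 -> 1 - (binom_cdf n j).[x] <= 2 ^+ n * x ^+ j.+1.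
Proof.
case/andP=> x_ge0 x_le1.
have -> : (2 : R) ^+ n = \sum_(i < n.+1) 1 *+ 'C(n, i).
  by rewrite (_ : 2 = 1 + 1) // exprDn; apply: eq_bigr => i _; rewrite !expr1n mulr1.
rewrite -[X in X - _](sum_bernstein n x) horner_sum.
rewrite (bigID (fun i : 'I__ => (i <= j)%N)) /= addrC addrK.
rewrite mulr_suml [leRHS](bigID (fun i : 'I__ => (i <= j)%N)) /= -[leLHS]add0r.
apply: lerD; first by rewrite sumr_ge0 // => i _; rewrite mulr_ge0 ?exprn_ge0 ?mulrn_wge0.
apply: ler_sum => i; rewrite -ltnNge => j_lt_i.
rewrite horner_bernstein -mulr_natl ler_wpM2l ?ler0n //.
rewrite -[leRHS]mul1r ler_pM ?exprn_ge0 ?subr_ge0 ?exprn_ile1 ?subr_ge0 ?lerBlDr ?lerDl //.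
exact: ler_wiXn2l.
Qed.

Lemma binom_cdf_le_chernoff n j x :
  0 <= x <= 1 -> (binom_cdf n j).[x] <= 2 ^+ j * (1 - x / 2) ^+ n.
Proof.
case/andP=> x_ge0 x_le1.
rewrite (_ : 1 - x / 2 = (1 - x) + x / 2); last by field.
rewrite (exprDn (1 - x)) mulr_sumr horner_sum -[leLHS]addr0.
rewrite [leRHS](bigID (fun i : 'I__ => (i <= j)%N)) /=.
apply: lerD; last first.
  by rewrite sumr_ge0 // => i _; rewrite !(mulr_ge0, mulrn_wge0, exprn_ge0, subr_ge0, divr_ge0).
apply: ler_sum => i i_le_j.
have -> : (bernstein n i).[x] = 2 ^+ i * ((1 - x) ^+ (n - i) * (x / 2) ^+ i *+ 'C(n, i)).
  rewrite horner_bernstein mulrnAr exprMn exprVn; congr (_ *+ _); field.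
  by rewrite expf_neq0 // pnatr_eq0.
rewrite ler_wpM2r ?mulrn_wge0 ?mulr_ge0 ?exprn_ge0 ?subr_ge0 ?divr_ge0 //.
by rewrite ler_eXn2l // ltr1n.
Qed.

End Bernstein.

Section Cutoff.
Context {R : realFieldType}.
Variable K : nat.
Implicit Types (t eta rho : R) (j : nat).

Definition cutoff j : {poly R} := binom_cdf (K * j) j \Po 'X^2.

Lemma horner_cutoff j t : (cutoff j).[t] = (binom_cdf (K * j) j).[`|t| ^+ 2].
Proof. by rewrite horner_comp hornerXn real_normK ?num_real. Qed.

Lemma size_cutoff j : (size (cutoff j) <= (K * j).*2.+1)%N.
Proof.
apply: leq_trans (size_comp_poly_leq _ _) _.
rewrite size_polyXn /= -muln2 ltnS leq_mul2r /=.
by case: (size _) (@size_binom_cdf R (K * j) j).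
Qed.

Lemma sqr_norm_in01 t : `|t| <= 1 -> 0 <= `|t| ^+ 2 <= 1.
Proof. by move=> t_le1; rewrite exprn_ge0 ?exprn_ile1. Qed.

Lemma cutoff_ge0 j {t} : `|t| <= 1 -> 0 <= (cutoff j).[t].
Proof. by move=> t_le1; rewrite horner_cutoff binom_cdf_ge0 ?sqr_norm_in01. Qed.

Lemma cutoff_le1 j {t} : `|t| <= 1 -> (cutoff j).[t] <= 1.
Proof. by move=> t_le1; rewrite horner_cutoff binom_cdf_le1 ?sqr_norm_in01. Qed.

Lemma cutoff_le_half {eta} j {t} : 0 <= eta <= `|t| -> `|t| <= 1 ->
  (1 - eta ^+ 2 / 2) ^+ K <= 1 / 4 -> (cutoff j).[t] <= (1 / 2) ^+ j.
Proof.
move=> /andP[eta_ge0 eta_le_t] t_le1 decay; have t2_unit := sqr_norm_in01 _ t_le1.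
rewrite horner_cutoff; apply: le_trans (binom_cdf_le_chernoff _ _ _ t2_unit) _.
set s := 1 - _ / 2; have s_ge0 : 0 <= s by rewrite /s; lra.
have s_le : s <= 1 - eta ^+ 2 / 2.
  by rewrite /s lerD2l lerN2 ler_pM2r // lerXn2r ?nnegrE.
have sK_le : s ^+ K <= 1 / 4.
  by apply: le_trans _ decay; rewrite lerXn2r ?nnegrE ?(le_trans s_ge0 s_le).
rewrite exprM -exprMn lerXn2r ?nnegrE ?mulr_ge0 ?exprn_ge0 //; lra.
Qed.

Lemma one_sub_cutoff_le rho j t : `|t| <= rho -> rho <= 1 ->
  1 - (cutoff j).[t] <= (2 ^+ K * rho) ^+ j.
Proof.
move=> t_le_rho rho_le1; have t_le1 := le_trans t_le_rho rho_le1.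
rewrite horner_cutoff; apply: le_trans (binom_cdf_upper_tail _ _ _ (sqr_norm_in01 _ t_le1)) _.
have t2_le_rho : `|t| ^+ 2 <= rho by apply: le_trans t_le_rho; rewrite expr2 ler_piMr.
rewrite exprM [leRHS]exprMn ler_wpM2l ?exprn_ge0 // exprSr -[leRHS]mulr1.
rewrite ler_pM ?exprn_ge0 ?lerXn2r ?nnegrE ?exprn_ge0 ?exprn_ile1 //.
by apply: le_trans t_le_rho.
Qed.

End Cutoff.

Lemma root0_norm_horner_le {R : realFieldType} {Q : {poly R}} : Q.[0] = 0 ->
  exists2 C, 0 < C & forall t, `|t| <= 1 -> `|Q.[t]| <= C * `|t|.
Proof.
move=> /eqP Q0; have [Q' ->] := factor_theorem Q 0 Q0.
exists (\sum_(i < size Q') `|Q'`_i| + 1) => [|t t_le1].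
  by rewrite ltr_pwDr // sumr_ge0.
rewrite subr0 hornerMX normrM ler_wpM2r // horner_coef (le_trans (ler_norm_sum _ _ _)) //.
rewrite -[leLHS]addr0 lerD // ler_sum // => i _.
by rewrite normrM normrX ler_piMr ?exprn_ile1.
Qed.

Lemma supnorm11_le (R : realType) (P : {poly R}) (e : R) :
  (forall t, `|t| <= 1 -> `|P.[t]| <= e) -> supnorm11 P <= e.
Proof.
move=> P_le; apply: ge_sup => [|_ [t t11 <-]].
  by exists `|P.[0]|, 0 => //=; rewrite in_itv /= lerN10 ler01.
by apply: P_le; move: t11; rewrite /= in_itv /= ler_norml.
Qed.

Section CutoffProduct.
Context {R : realFieldType} {Q : {poly R}} {C : R} {K : nat}.
Hypotheses (C_gt0 : 0 < C) (Q_le : forall t, `|t| <= 1 -> `|Q.[t]| <= C * `|t|).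

Lemma norm_horner_mul_cutoff_le {eta e j t} :
  0 <= eta -> (1 - eta ^+ 2 / 2) ^+ K <= 1 / 4 -> C * eta <= e ->
  C * (1 / 2) ^+ j <= e -> `|t| <= 1 -> `|(Q * cutoff K j).[t]| <= e.
Proof.
move=> eta_ge0 decay C_eta C_half t_le1.
rewrite hornerM normrM (ger0_norm (cutoff_ge0 K j t_le1)).
have [t_le_eta | eta_lt_t] := lerP `|t| eta.
  apply: le_trans C_eta; rewrite -[leRHS]mulr1 ler_pM ?cutoff_ge0 ?cutoff_le1 //.
  exact: le_trans (Q_le _ t_le1) (ler_wpM2l (ltW C_gt0) t_le_eta).
have eta_le_t : 0 <= eta <= `|t| by rewrite eta_ge0 ltW.
have S_le := cutoff_le_half K j eta_le_t t_le1 decay.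
apply: le_trans C_half; rewrite ler_pM ?cutoff_ge0 //.
by rewrite -[leRHS]mulr1 (le_trans (Q_le _ t_le1)) ?(ler_wpM2l (ltW C_gt0)).
Qed.

Lemma norm_horner_mul_one_sub_cutoff_le {rho j t} : `|t| <= rho -> rho <= 1 ->
  `|(Q * (1 - cutoff K j)).[t]| <= C * rho * (2 ^+ K * rho) ^+ j.
Proof.
move=> t_le_rho rho_le1; have t_le1 := le_trans t_le_rho rho_le1.
have S_le1 := cutoff_le1 K j t_le1.
rewrite hornerM normrM !hornerE [`|1 - _|]ger0_norm ?subr_ge0 //.
rewrite ler_pM ?subr_ge0 ?cutoff_le1 ?one_sub_cutoff_le //.
exact: le_trans (Q_le _ t_le1) (ler_wpM2l (ltW C_gt0) t_le_rho).
Qed.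

Lemma exists_one_sub_cutoff_le {b d} : 0 < b -> 0 < d -> exists2 rho, 0 < rho &
  forall j t, `|t| <= rho -> `|(Q * (1 - cutoff K j)).[t]| <= b * d ^+ j.
Proof.
move=> b_gt0 d_gt0.
pose rho := Num.min 1 (Num.min (C^-1 * b) ((2 ^+ K)^-1 * d)).
have rho_gt0 : 0 < rho by rewrite !lt_min ltr01 !mulr_gt0 ?invr_gt0 ?exprn_gt0.
have rho_le1 : rho <= 1 by rewrite ge_min lexx.
have C_rho : C * rho <= b.
  have : rho <= C^-1 * b by rewrite !ge_min lexx !orbT.
  by rewrite ler_pdivlMl.
have twoK_rho : 2 ^+ K * rho <= d.
  have : rho <= (2 ^+ K)^-1 * d by rewrite !ge_min lexx !orbT.
  by rewrite ler_pdivlMl ?exprn_gt0.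
exists rho => // j t t_le_rho.
apply: le_trans (norm_horner_mul_one_sub_cutoff_le t_le_rho rho_le1) _.
have rho_ge0 := ltW rho_gt0.
apply: ler_pM => //; first by rewrite mulr_ge0 ?ltW.
  by rewrite exprn_ge0 ?mulr_ge0 ?exprn_ge0 ?ler0n.
by rewrite lerXn2r ?nnegrE ?mulr_ge0 ?exprn_ge0 ?ler0n ?(ltW d_gt0).
Qed.

End CutoffProduct.

Lemma near_expr_le {R : archiRealFieldType} {c e : R} :
  0 <= c < 1 -> 0 < e -> \forall n \near \oo, c ^+ n <= e.
Proof.
move=> /andP[c_ge0 c_lt1] e_gt0; have c_norm_lt1 : `|c| < 1 by rewrite ger0_norm.
apply: (filterS _ (cvgr0_norm_le _ (cvg_expr c_norm_lt1) _ e_gt0)) => n.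
by rewrite ger0_norm ?exprn_ge0.
Qed.

Lemma exists_cutoff_sup_le {R : archiRealFieldType} {Q : {poly R}} {C eps : R} :
  0 < C -> (forall t, `|t| <= 1 -> `|Q.[t]| <= C * `|t|) -> 0 < eps ->
  exists2 K, (0 < K)%N &
    \forall j \near \oo, forall t, `|t| <= 1 -> `|(Q * cutoff K j).[t]| <= eps.
Proof.
move=> C_gt0 Q_le eps_gt0.
pose eta := Num.min 1 (eps / C).
have eta_gt0 : 0 < eta by rewrite lt_min ltr01 divr_gt0.
have eta_le1 : eta <= 1 by rewrite ge_min lexx.
have C_eta : C * eta <= eps by rewrite mulrC -ler_pdivlMr // ge_min lexx orbT.
have base01 : 0 <= 1 - eta ^+ 2 / 2 < 1.
  have := exprn_gt0 2 eta_gt0; have := exprn_ile1 2 (ltW eta_gt0) eta_le1.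
  by move=> ? ?; apply/andP; split; lra.
have quarter_gt0 : 0 < 1 / 4 :> R by lra.
have [K [K_gt0 decay]] :=
  filter_ex (filterI (nbhs_infty_gt 0) (near_expr_le base01 quarter_gt0)).
exists K => //.
have half01 : 0 <= (1 / 2 : R) < 1 by apply/andP; split; lra.
apply: (filterS _ (near_expr_le half01 (divr_gt0 eps_gt0 C_gt0))) => j half_le t.
apply: (norm_horner_mul_cutoff_le C_gt0 Q_le (ltW eta_gt0) decay C_eta).
by rewrite mulrC -ler_pdivlMr.
Qed.

Theorem mainTheorem7 (R : realType) (Q : {poly R}) (eps : R) (N : R)
    (phi : R -> R) :
  Q.[0] = 0 -> 0 < eps ->
  {homo phi : x y / x <= y >-> y <= x} ->
  phi x @[x --> +oo] --> 0 ->
  exists (M : nat) (P : {poly R}),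
    [/\ N < M%:R, P.[0] = 0, (size P <= M.+1)%N,
        supnorm11 P <= eps &
        forall t : R, `|t| <= phi M%:R -> `|(Q + P).[t]| <= expR (- 2 * M%:R)].
Proof.
move=> Q0 eps_gt0 _ phi_to0.
have [C C_gt0 Q_le] := root0_norm_horner_le Q0.
have [K K_gt0 sup_le] := exists_cutoff_sup_le C_gt0 Q_le eps_gt0.
pose a : R := expR (-2).
have a_gt0 : 0 < a by rewrite expR_gt0.
have [rho rho_gt0 near0_le] := exists_one_sub_cutoff_le (K := K) C_gt0 Q_le
  (exprn_gt0 (size Q) a_gt0) (exprn_gt0 K (exprn_gt0 2 a_gt0)).
pose M j := (size Q + (K * j).*2)%N.
have M_oo : ((M j)%:R : R) @[j --> \oo] --> +oo.
  by apply: (ger_cvgy _ cvgr_idn); near=> j; rewrite ler_nat /M; nia.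
have phiM_to0 : phi (M j)%:R @[j --> \oo] --> 0 := cvg_comp _ _ M_oo phi_to0.
near \oo => j.
exists (M j), (- (Q * cutoff K j)); split.
- by near: j; move/cvgryPgt : M_oo; apply.
- by rewrite hornerN hornerM Q0 mul0r oppr0.
- rewrite size_polyN (leq_trans (size_polyMleq _ _)) // (leq_trans (leq_pred _)) //.
  by rewrite /M -addnS leq_add2l size_cutoff.
- apply: supnorm11_le; near: j; apply: (filterS _ sup_le) => j sup_le_j t t_le1.
  by rewrite hornerN normrN sup_le_j.
- move=> t t_le_phi; rewrite -[Q in Q + _]mulr1 -mulrN -mulrDr.
  have -> : expR (- 2 * (M j)%:R) = a ^+ size Q * ((a ^+ 2) ^+ K) ^+ j.
    by rewrite /M mulrC expRM_natl exprD -!exprM -muln2 mulnC mulnA.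
  rewrite near0_le //.
  apply: le_trans t_le_phi _; near: j.
  apply: (filterS _ (cvgr0_norm_le _ phiM_to0 _ rho_gt0)) => j.
  exact: le_trans (ler_norm _).
Unshelve. all: by end_near.
Qed.
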